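(* For any $n\in\mathbb{N}$ and $A>0$, there exists $f\in C^2[-1,1]$ with $f\le0$ on $[-1,0]$ and $f\ge0$ on $[0,1]$, such that every algebraic polynomial $P_n$ of degree $\le n$ with $P_n\le0$ on $[-1,0]$, $P_n\ge0$ on $[0,1]$ and $P_n^{(i)}(0)=f^{(i)}(0)$ for $i=0,1$ obeys $$\|f-P_n\|>A\,\omega_4(f'',1).$$
   Context: $\|\cdot\|$ is the sup norm on $[-1,1]$; $\omega_4(g,t)$ is the fourth modulus of smoothness of $g$ on $[-1,1]$. *)

From Stdlib Require Import Reals.
From Coquelicot Require Import Coquelicot.
Open Scope R_scope.

Definition I11 (x : R) : Prop := -1 <= x <= 1.

Definition has_deriv_on_I11 (g dg : R -> R) : Prop :=
  forall x, I11 x ->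
    limit1_in (fun y => (g y - g x) / (y - x)) (fun y => I11 y /\ y <> x) (dg x) x.

Definition cont_on_I11 (g : R -> R) : Prop :=
  forall x, I11 x -> limit1_in g I11 (g x) x.

Definition C2_I11 (f f1 f2 : R -> R) : Prop :=
  has_deriv_on_I11 f f1 /\ has_deriv_on_I11 f1 f2 /\ cont_on_I11 f2.

Definition supnorm (g : R -> R) : Rbar :=
  Lub_Rbar (fun y => exists x, I11 x /\ y = Rabs (g x)).

Definition delta4 (g : R -> R) (h x : R) : R :=
  g x - 4 * g (x + h) + 6 * g (x + 2 * h) - 4 * g (x + 3 * h) + g (x + 4 * h).

Definition omega4 (g : R -> R) (t : R) : Rbar :=
  Lub_Rbar (fun y => exists h x, 0 < h <= t /\ I11 x /\ I11 (x + 4 * h)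
                                 /\ y = Rabs (delta4 g h x)).

Definition poly_eval (n : nat) (c : nat -> R) (x : R) : R :=
  sum_f_R0 (fun k => c k * x ^ k) n.

From Stdlib Require Import Reals Lra Lia.
From Coquelicot Require Import Coquelicot.
Open Scope R_scope.

(* Take [f(x) = x^7 / (x^2 + m^2)].  Its second derivative differs from the cubic
   [20 x^3 - 6 m^2 x] by at most [3 m^3], so [omega_4(f'', 1) <= 48 m^3], and [f]
   itself differs from [x^5 - m^2 x^3] by at most [m^4].  A polynomial [P] of degree
   [<= n] with [||f - P|| <= 48 A m^3] is thus [O(m^3)]-close to [x^5 - m^2 x^3];
   as all norms on polynomials of degree [<= n + 5] are equivalent, its coefficient
   [c_3] of [x^3] is [-m^2 + O(m^3)], negative for small [m].  But [P <= 0] on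
   [[-1,0]], [P >= 0] on [[0,1]] and [P'(0) = f'(0) = 0] give
   [0 <= P(x) - P(-x) = 2 c_3 x^3 + O(x^4)] near [0], so [c_3 >= 0]. *)

Lemma poly_eval_S n c x : poly_eval (S n) c x = poly_eval n c x + c (S n) * x ^ S n.
Proof. reflexivity. Qed.

Lemma poly_eval_at1 n c : poly_eval n c 1 = sum_f_R0 c n.
Proof. unfold poly_eval; apply sum_eq; intros; rewrite pow1; ring. Qed.

Lemma poly_eval_sub n a b x :
  poly_eval n (fun k => a k - b k) x = poly_eval n a x - poly_eval n b x.
Proof. unfold poly_eval; rewrite <- minus_sum; apply sum_eq; intros; ring. Qed.

Lemma poly_eval_dilate n c a x :
  a * poly_eval n c (x / 2) - poly_eval n c x
  = poly_eval n (fun k => c k * (a / 2 ^ k - 1)) x.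
Proof.
  induction n as [|n IH].
  - unfold poly_eval; simpl; field.
  - rewrite !poly_eval_S, <- IH.
    assert (2 ^ S n <> 0) by (apply pow_nonzero; lra).
    unfold Rdiv; rewrite Rpow_mult_distr, pow_inv; field; trivial.
Qed.

Lemma poly_eval_dilate_top n c x :
  2 ^ S n * poly_eval (S n) c (x / 2) - poly_eval (S n) c x
  = poly_eval n (fun k => c k * (2 ^ S n / 2 ^ k - 1)) x.
Proof.
  rewrite poly_eval_dilate, poly_eval_S, Rdiv_diag by (apply pow_nonzero; lra).
  ring.
Qed.

Lemma dilate_factor_ge1 n k : (k <= n)%nat -> 1 <= 2 ^ S n / 2 ^ k - 1.
Proof.
  intros Hk. replace (S n) with (k + S (n - k))%nat by lia.
  rewrite pow_add, Rmult_div_r by (apply pow_nonzero; lra).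
  simpl. assert (1 <= 2 ^ (n - k)) by (apply pow_R1_Rle; lra). lra.
Qed.

Lemma Rabs_sum_le n (a : nat -> R) B :
  (forall k, (k <= n)%nat -> Rabs (a k) <= B) -> Rabs (sum_f_R0 a n) <= INR (S n) * B.
Proof.
  intros H. eapply Rle_trans; [apply Rsum_abs|].
  rewrite Rmult_comm, <- sum_cte. apply sum_Rle; auto.
Qed.

(* Induction on the degree: [2^(n+1) P(x/2) - P(x)] kills the top coefficient and
   only rescales the others by factors [>= 1]; the top one is then read off [P(1)]. *)
Lemma poly_coef_bound N : exists K, 0 <= K /\ forall c D,
  (forall x, 0 <= x <= 1 -> Rabs (poly_eval N c x) <= D) ->
  forall k, (k <= N)%nat -> Rabs (c k) <= K * D.
Proof.
  induction N as [|n [K [HK IH]]].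
  - exists 1. split; [lra|]. intros c D H k Hk. replace k with 0%nat by lia.
    specialize (H 0 ltac:(lra)). unfold poly_eval in H. simpl in H.
    rewrite Rmult_1_r in H. lra.
  - set (K1 := K * (2 ^ S n + 1)).
    assert (HK1 : 0 <= K1).
    { pose proof (pow_le 2 (S n) ltac:(lra)). apply Rmult_le_pos; lra. }
    assert (Hn : 1 <= INR (S n)) by (apply (le_INR 1); lia).
    exists (1 + INR (S n) * K1). split; [nra|].
    intros c D H.
    assert (HD : 0 <= D) by (eapply Rle_trans; [apply Rabs_pos|apply (H 0); lra]).
    assert (Hlow : forall k, (k <= n)%nat -> Rabs (c k) <= K1 * D).
    { intros k Hk.
      assert (Hdil : forall x, 0 <= x <= 1 ->
        Rabs (poly_eval n (fun k => c k * (2 ^ S n / 2 ^ k - 1)) x) <= (2 ^ S n + 1) * D).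
      { intros x Hx. rewrite <- poly_eval_dilate_top.
        pose proof (H x Hx). pose proof (H (x / 2) ltac:(lra)).
        pose proof (pow_le 2 (S n) ltac:(lra)).
        eapply Rle_trans; [apply Rabs_triang|].
        rewrite Rabs_Ropp, Rabs_mult, (Rabs_right (2 ^ S n)) by lra. nra. }
      pose proof (IH _ _ Hdil k Hk) as Hk'.
      pose proof (dilate_factor_ge1 n k Hk).
      cbv beta in Hk'. rewrite Rabs_mult, (Rabs_right (_ - 1)) in Hk' by lra.
      pose proof (Rabs_pos (c k)). unfold K1. nra. }
    intros k Hk. destruct (Nat.le_gt_cases k n) as [Hkn|Hkn].
    + specialize (Hlow k Hkn).
      assert (0 <= (INR (S n) - 1) * K1 * D) by (apply Rmult_le_pos; [apply Rmult_le_pos|]; lra).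
      nra.
    + replace k with (S n) by lia.
      pose proof (H 1 ltac:(lra)) as H1. rewrite poly_eval_at1 in H1. simpl in H1.
      pose proof (Rabs_sum_le n c _ Hlow).
      replace (c (S n)) with (sum_f_R0 c n + c (S n) - sum_f_R0 c n) by ring.
      eapply Rle_trans; [apply Rabs_triang|]. rewrite Rabs_Ropp. nra.
Qed.

Definition poly_trunc (n : nat) (c : nat -> R) (k : nat) : R :=
  if (k <=? n)%nat then c k else 0.

Lemma poly_eval_trunc n N c x :
  (n <= N)%nat -> poly_eval N (poly_trunc n c) x = poly_eval n c x.
Proof.
  intros HnN. induction HnN as [|N HnN IH].
  - apply sum_eq. intros k Hk. unfold poly_trunc. now rewrite (proj2 (Nat.leb_le k n) Hk).
  - rewrite poly_eval_S, IH. unfold poly_trunc.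
    rewrite (proj2 (Nat.leb_gt (S N) n)) by lia. ring.
Qed.

Lemma poly_eval_is_derive0 N c : is_derive (poly_eval (S N) c) 0 (c 1%nat).
Proof.
  induction N as [|N IH].
  - apply (is_derive_ext (fun x => c 0%nat + c 1%nat * x)).
    { intros x. unfold poly_eval. simpl. ring. }
    auto_derive; auto; ring.
  - apply (is_derive_ext (fun x => poly_eval (S N) c x + c (S (S N)) * x ^ S (S N))).
    { reflexivity. }
    replace (c 1%nat) with (c 1%nat + 0) by ring.
    apply (is_derive_plus (poly_eval (S N) c)); [exact IH|]. auto_derive; auto. simpl. ring.
Qed.

Lemma Rabs_pow_sub_pow_opp_le x k :
  0 <= x <= 1 -> (4 <= k)%nat -> Rabs (x ^ k - (- x) ^ k) <= 2 * x ^ 4.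
Proof.
  intros Hx Hk.
  assert (Hxk : x ^ k <= x ^ 4).
  { replace k with (4 + (k - 4))%nat by lia. rewrite pow_add.
    pose proof (pow_le x 4 ltac:(lra)). pose proof (pow_le x (k - 4) ltac:(lra)).
    assert (x ^ (k - 4) <= 1) by (rewrite <- (pow1 (k - 4)); apply pow_incr; lra).
    nra. }
  eapply Rle_trans; [apply Rabs_triang|].
  rewrite Rabs_Ropp, <- !RPow_abs, Rabs_Ropp, Rabs_right by lra. lra.
Qed.

Lemma poly_eval_odd_part_le N c x : (3 <= N)%nat -> 0 <= x <= 1 ->
  poly_eval N c x - poly_eval N c (- x) <=
  2 * c 1%nat * x + 2 * c 3%nat * x ^ 3 + 2 * x ^ 4 * sum_f_R0 (fun k => Rabs (c k)) N.
Proof.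
  intros HN Hx. induction HN as [|N HN IH].
  - pose proof (cond_pos_sum (fun k => Rabs (c k)) 3 (fun k => Rabs_pos (c k))).
    pose proof (pow_le x 4 ltac:(lra)).
    replace (poly_eval 3 c x - poly_eval 3 c (- x)) with (2 * c 1%nat * x + 2 * c 3%nat * x ^ 3)
      by (unfold poly_eval; simpl; ring).
    nra.
  - rewrite !poly_eval_S. simpl sum_f_R0.
    pose proof (Rabs_pow_sub_pow_opp_le x (S N) Hx ltac:(lia)) as Hpow.
    pose proof (Rabs_pos (c (S N))).
    assert (Hterm : c (S N) * x ^ S N - c (S N) * (- x) ^ S N <= 2 * x ^ 4 * Rabs (c (S N))).
    { rewrite <- Rmult_minus_distr_l. eapply Rle_trans; [apply Rle_abs|].
      rewrite Rabs_mult. nra. }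
    lra.
Qed.

(* Letting [x -> 0+] in [0 <= P(x) - P(-x) = 2 c_3 x^3 + O(x^4)]. *)
Lemma poly_coef3_ge0_of_odd_part_ge0 N c : (3 <= N)%nat -> c 1%nat = 0 ->
  (forall x, 0 < x <= 1 -> poly_eval N c (- x) <= poly_eval N c x) -> 0 <= c 3%nat.
Proof.
  intros HN Hc1 Hodd. apply Rnot_lt_le. intros Hc3.
  set (s := sum_f_R0 (fun k => Rabs (c k)) N).
  assert (Hs : 0 <= s) by (apply cond_pos_sum; intros; apply Rabs_pos).
  set (x := Rmin 1 (- c 3%nat / (2 * (s + 1)))).
  assert (Hx : 0 < x <= 1).
  { split; [apply Rmin_glb_lt; [lra|apply Rdiv_lt_0_compat; lra]|apply Rmin_l]. }
  assert (HxS : x * s <= - c 3%nat / 2).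
  { assert (Hr := Rmin_r 1 (- c 3%nat / (2 * (s + 1)))). fold x in Hr.
    apply (Rmult_le_compat_r (s + 1)) in Hr; [|lra].
    replace (- c 3%nat / (2 * (s + 1)) * (s + 1)) with (- c 3%nat / 2) in Hr by (field; lra).
    nra. }
  pose proof (poly_eval_odd_part_le N c x HN ltac:(lra)) as Hle.
  pose proof (Hodd x Hx). rewrite Hc1 in Hle. fold s in Hle.
  assert (0 < x ^ 3) by (apply pow_lt; lra).
  assert (Hneg : 2 * c 3%nat * x ^ 3 + 2 * x ^ 4 * s < 0).
  { replace (2 * c 3%nat * x ^ 3 + 2 * x ^ 4 * s) with (2 * x ^ 3 * (c 3%nat + x * s)) by ring.
    nra. }
  lra.
Qed.

Lemma poly_trunc_coef3_ge0 n c :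
  (forall x, -1 <= x <= 0 -> poly_eval n c x <= 0) ->
  (forall x, 0 <= x <= 1 -> 0 <= poly_eval n c x) ->
  derivable_pt_lim (poly_eval n c) 0 0 ->
  0 <= poly_trunc n c 3.
Proof.
  intros Hneg Hpos Hd.
  assert (Heval : forall x, poly_eval (S (S (S n))) (poly_trunc n c) x = poly_eval n c x)
    by (intros; apply poly_eval_trunc; lia).
  apply (poly_coef3_ge0_of_odd_part_ge0 (S (S (S n)))); [lia| |].
  - rewrite <- (is_derive_unique _ _ _ (poly_eval_is_derive0 (S (S n)) (poly_trunc n c))).
    apply is_derive_unique, (is_derive_ext (poly_eval n c)); [intros; symmetry; apply Heval|].
    now apply is_derive_Reals.
  - intros x Hx. rewrite !Heval. pose proof (Hneg (- x)). pose proof (Hpos x). lra.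
Qed.

Lemma delta4_sub_cubic g a b c d h x :
  delta4 g h x = delta4 (fun y => g y - (a * y ^ 3 + b * y ^ 2 + c * y + d)) h x.
Proof. unfold delta4. ring. Qed.

Lemma Rabs_delta4_le g eps h x :
  (forall y, Rabs (g y) <= eps) -> Rabs (delta4 g h x) <= 16 * eps.
Proof.
  intros Hg. unfold delta4.
  pose proof (proj1 (Rabs_le_between _ _) (Hg x)).
  pose proof (proj1 (Rabs_le_between _ _) (Hg (x + h))).
  pose proof (proj1 (Rabs_le_between _ _) (Hg (x + 2 * h))).
  pose proof (proj1 (Rabs_le_between _ _) (Hg (x + 3 * h))).
  pose proof (proj1 (Rabs_le_between _ _) (Hg (x + 4 * h))).
  apply Rabs_le. lra.
Qed.

Lemma omega4_le_near_cubic g a b c d eps t :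
  (forall y, Rabs (g y - (a * y ^ 3 + b * y ^ 2 + c * y + d)) <= eps) ->
  Rbar_le (omega4 g t) (16 * eps).
Proof.
  intros Hg. apply Lub_Rbar_correct. intros y (h & x & _ & _ & _ & ->).
  rewrite (delta4_sub_cubic g a b c d). now apply Rabs_delta4_le.
Qed.

Lemma omega4_ge0 g t : 0 < t -> Rbar_le 0 (omega4 g t).
Proof.
  intros Ht. set (h := Rmin t (1 / 2)).
  assert (0 < h <= 1 / 2) by (split; [apply Rmin_glb_lt|apply Rmin_r]; lra).
  apply (Rbar_le_trans _ (Rabs (delta4 g h (-1)))); [apply Rabs_pos|].
  apply Lub_Rbar_correct. exists h, (-1). unfold I11. repeat split; try lra. apply Rmin_l.
Qed.

Lemma Rabs_le_supnorm g x : I11 x -> Rbar_le (Rabs (g x)) (supnorm g).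
Proof. intros Hx. apply Lub_Rbar_correct. now exists x. Qed.

Lemma Rabs_le_of_supnorm_le_mult g (w : Rbar) (A W : R) x :
  0 < A -> Rbar_le 0 w -> Rbar_le w W ->
  Rbar_le (supnorm g) (Rbar_mult A w) -> I11 x -> Rabs (g x) <= A * W.
Proof.
  intros HA Hw0 HwW Hg Hx.
  destruct w as [w| |]; simpl in Hw0, HwW; try contradiction.
  pose proof (Rbar_le_trans _ _ _ (Rabs_le_supnorm g x Hx) Hg) as H. simpl in H.
  apply (Rmult_le_compat_l A) in HwW; lra.
Qed.

Lemma has_deriv_on_I11_of_derivable g dg :
  (forall x, derivable_pt_lim g x (dg x)) -> has_deriv_on_I11 g dg.
Proof.
  intros H x _ eps Heps. destruct (H x eps Heps) as [del Hdel].
  exists del. split; [apply cond_pos|].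
  intros y [[_ Hyx] Hdy]. simpl in *. unfold R_dist in *.
  specialize (Hdel (y - x) ltac:(lra) Hdy). now replace (x + (y - x)) with y in Hdel by ring.
Qed.

Lemma cont_on_I11_of_continuity g : (forall x, continuity_pt g x) -> cont_on_I11 g.
Proof.
  intros H x _ eps Heps. destruct (H x eps Heps) as [del [Hdel Hd]].
  exists del. split; [exact Hdel|].
  intros y [_ Hdy]. destruct (Req_dec x y) as [<-|Hxy].
  - simpl. unfold R_dist. rewrite Rminus_diag, Rabs_R0. lra.
  - apply Hd. repeat split; auto.
Qed.

Lemma C2_I11_of_is_derive f f1 f2 :
  (forall x, is_derive f x (f1 x)) -> (forall x, is_derive f1 x (f2 x)) ->
  (forall x, ex_derive f2 x) -> C2_I11 f f1 f2.
Proof.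
  intros H1 H2 H3. repeat split.
  - apply has_deriv_on_I11_of_derivable. intros x. now apply is_derive_Reals.
  - apply has_deriv_on_I11_of_derivable. intros x. now apply is_derive_Reals.
  - apply cont_on_I11_of_continuity. intros x.
    now apply derivable_continuous_pt, ex_derive_Reals_0.
Qed.

Definition rat7 (m x : R) : R := x ^ 7 / (x ^ 2 + m ^ 2).
Definition rat7_d1 (m x : R) : R := x ^ 6 * (5 * x ^ 2 + 7 * m ^ 2) / (x ^ 2 + m ^ 2) ^ 2.
Definition rat7_d2 (m x : R) : R :=
  20 * x ^ 3 - 6 * m ^ 2 * x - m ^ 6 * (2 * x ^ 3 - 6 * m ^ 2 * x) / (x ^ 2 + m ^ 2) ^ 3.

Section Rat7.

Variable m : R.
Hypothesis m_gt0 : 0 < m.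

Let denom_gt0 x : 0 < x ^ 2 + m ^ 2.
Proof. pose proof (pow2_ge_0 x). pose proof (pow_lt m 2 m_gt0). lra. Qed.

(* The shape in which [auto_derive] states its side conditions. *)
Let denom_neq0 x : x * (x * 1) + m * (m * 1) <> 0.
Proof. pose proof (denom_gt0 x). simpl in *. lra. Qed.

Ltac denoms_neq0 :=
  repeat split;
  repeat match goal with |- _ * _ <> 0 => apply Rmult_integral_contrapositive_currified end;
  first [apply denom_neq0 | apply R1_neq_R0].

Lemma rat7_is_derive x : is_derive (rat7 m) x (rat7_d1 m x).
Proof. unfold rat7, rat7_d1. auto_derive; [denoms_neq0|field; denoms_neq0]. Qed.

Lemma rat7_d1_is_derive x : is_derive (rat7_d1 m) x (rat7_d2 m x).
Proof. unfold rat7_d1, rat7_d2. auto_derive; [denoms_neq0|field; denoms_neq0]. Qed.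

Lemma rat7_d2_ex_derive x : ex_derive (rat7_d2 m) x.
Proof. unfold rat7_d2. auto_derive. denoms_neq0. Qed.

Lemma rat7_C2 : C2_I11 (rat7 m) (rat7_d1 m) (rat7_d2 m).
Proof.
  apply C2_I11_of_is_derive;
    [apply rat7_is_derive|apply rat7_d1_is_derive|apply rat7_d2_ex_derive].
Qed.

Lemma rat7_d1_0 : rat7_d1 m 0 = 0.
Proof. unfold rat7_d1. field. pose proof (denom_gt0 0). lra. Qed.

Lemma rat7_eq x : rat7 m x = x * ((x ^ 3) ^ 2 / (x ^ 2 + m ^ 2)).
Proof. unfold rat7, Rdiv. ring. Qed.

Lemma rat7_le0 x : x <= 0 -> rat7 m x <= 0.
Proof.
  intros Hx. rewrite rat7_eq.
  assert (0 <= (x ^ 3) ^ 2 / (x ^ 2 + m ^ 2))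
    by (apply Rdiv_le_0_compat; [apply pow2_ge_0|apply denom_gt0]).
  nra.
Qed.

Lemma rat7_ge0 x : 0 <= x -> 0 <= rat7 m x.
Proof.
  intros Hx. rewrite rat7_eq.
  assert (0 <= (x ^ 3) ^ 2 / (x ^ 2 + m ^ 2))
    by (apply Rdiv_le_0_compat; [apply pow2_ge_0|apply denom_gt0]).
  nra.
Qed.

Lemma Rabs_rat7_sub_quintic_le x :
  -1 <= x <= 1 -> Rabs (rat7 m x - (x ^ 5 - m ^ 2 * x ^ 3)) <= m ^ 4.
Proof.
  intros Hx. pose proof (denom_gt0 x).
  replace (rat7 m x - (x ^ 5 - m ^ 2 * x ^ 3)) with (m ^ 4 * (x ^ 3 / (x ^ 2 + m ^ 2)))
    by (unfold rat7; field; lra).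
  assert (Hm4 : 0 < m ^ 4) by (apply pow_lt; lra).
  rewrite Rabs_mult, Rabs_right, Rabs_div, (Rabs_right (_ + _)) by lra.
  enough (Rabs (x ^ 3) / (x ^ 2 + m ^ 2) <= 1) by nra.
  apply Rle_div_l; [lra|].
  assert (Rabs x <= 1) by (apply Rabs_le; lra).
  rewrite <- RPow_abs. replace (Rabs x ^ 3) with (Rabs x * x ^ 2)
    by (rewrite <- pow2_abs; ring).
  pose proof (Rabs_pos x). pose proof (pow2_ge_0 x). pose proof (pow_lt m 2 m_gt0). nra.
Qed.

Lemma Rabs_rat7_d2_sub_cubic_le x :
  Rabs (rat7_d2 m x - (20 * x ^ 3 - 6 * m ^ 2 * x)) <= 3 * m ^ 3.
Proof.
  pose proof (denom_gt0 x) as Hq.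
  assert (Hq3 : 0 < (x ^ 2 + m ^ 2) ^ 3) by (apply pow_lt; lra).
  replace (rat7_d2 m x - (20 * x ^ 3 - 6 * m ^ 2 * x))
    with (- (m ^ 6 * (2 * x ^ 3 - 6 * m ^ 2 * x) / (x ^ 2 + m ^ 2) ^ 3))
    by (unfold rat7_d2; field; lra).
  rewrite Rabs_Ropp, Rabs_div, (Rabs_right (_ ^ 3)) by lra.
  apply Rle_div_l; [lra|].
  set (a := Rabs x). assert (Ha : 0 <= a) by apply Rabs_pos.
  assert (Hx2 : x ^ 2 = a ^ 2) by (unfold a; now rewrite pow2_abs).
  assert (Hodd : Rabs (2 * x ^ 3 - 6 * m ^ 2 * x) <= 6 * a * (a ^ 2 + m ^ 2)).
  { replace (2 * x ^ 3 - 6 * m ^ 2 * x) with (x * (2 * x ^ 2 - 6 * m ^ 2)) by ring.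
    rewrite Rabs_mult, Hx2. fold a.
    assert (Rabs (2 * a ^ 2 - 6 * m ^ 2) <= 6 * (a ^ 2 + m ^ 2)).
    { pose proof (pow2_ge_0 a). pose proof (pow2_ge_0 m). apply Rabs_le. lra. }
    pose proof (Rabs_pos (2 * a ^ 2 - 6 * m ^ 2)). nra. }
  assert (Hamgm : 2 * a * m ^ 3 <= (a ^ 2 + m ^ 2) ^ 2).
  { assert (2 * a * m <= a ^ 2 + m ^ 2) by (pose proof (pow2_ge_0 (a - m)); nra).
    pose proof (pow2_ge_0 a). pose proof (pow2_ge_0 m).
    replace (2 * a * m ^ 3) with (2 * a * m * m ^ 2) by ring.
    replace ((a ^ 2 + m ^ 2) ^ 2) with ((a ^ 2 + m ^ 2) * (a ^ 2 + m ^ 2)) by ring.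
    apply Rmult_le_compat; nra. }
  rewrite Hx2, Rabs_mult, (Rabs_right (m ^ 6)) by (apply Rle_ge, pow_le; lra).
  assert (0 < m ^ 3) by (apply pow_lt; lra).
  pose proof (pow2_ge_0 a).
  apply (Rle_trans _ (m ^ 6 * (6 * a * (a ^ 2 + m ^ 2)))).
  - apply Rmult_le_compat_l; [apply pow_le; lra|exact Hodd].
  - replace (m ^ 6 * (6 * a * (a ^ 2 + m ^ 2)))
      with (3 * m ^ 3 * (a ^ 2 + m ^ 2) * (2 * a * m ^ 3)) by ring.
    replace (3 * m ^ 3 * (a ^ 2 + m ^ 2) ^ 3)
      with (3 * m ^ 3 * (a ^ 2 + m ^ 2) * (a ^ 2 + m ^ 2) ^ 2) by ring.
    apply Rmult_le_compat_l; [nra|exact Hamgm].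
Qed.

Lemma omega4_rat7_d2_le t : Rbar_le (omega4 (rat7_d2 m) t) (48 * m ^ 3).
Proof.
  replace (48 * m ^ 3) with (16 * (3 * m ^ 3)) by ring.
  apply (omega4_le_near_cubic _ 20 0 (- 6 * m ^ 2) 0). intros y.
  replace (20 * y ^ 3 + 0 * y ^ 2 + - 6 * m ^ 2 * y + 0) with (20 * y ^ 3 - 6 * m ^ 2 * y)
    by ring.
  apply Rabs_rat7_d2_sub_cubic_le.
Qed.

End Rat7.

Definition quintic_coef (m : R) (k : nat) : R :=
  match k with 3%nat => - m ^ 2 | 5%nat => 1 | _ => 0 end.

Lemma poly_eval_quintic_coef m N x :
  (5 <= N)%nat -> poly_eval N (quintic_coef m) x = x ^ 5 - m ^ 2 * x ^ 3.
Proof.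
  intros HN. induction HN as [|N HN IH].
  - unfold poly_eval. simpl. ring.
  - rewrite poly_eval_S, IH. destruct N as [|[|[|[|[|N]]]]]; try lia. simpl. ring.
Qed.

Lemma Rabs_poly_sub_quintic_le m n c D x : 0 < m -> -1 <= x <= 1 ->
  Rabs (rat7 m x - poly_eval n c x) <= D ->
  Rabs (poly_eval (5 + n) (fun k => poly_trunc n c k - quintic_coef m k) x) <= D + m ^ 4.
Proof.
  intros Hm Hx Hc.
  rewrite poly_eval_sub, poly_eval_trunc, poly_eval_quintic_coef by lia.
  replace (poly_eval n c x - (x ^ 5 - m ^ 2 * x ^ 3))
    with (- (rat7 m x - poly_eval n c x) + (rat7 m x - (x ^ 5 - m ^ 2 * x ^ 3))) by ring.
  eapply Rle_trans; [apply Rabs_triang|]. rewrite Rabs_Ropp.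
  pose proof (Rabs_rat7_sub_quintic_le m Hm x Hx). lra.
Qed.

Lemma small_scale_exists K B : 0 <= K -> 0 <= B -> exists m, 0 < m /\ K * (B + m) * m < 1.
Proof.
  intros HK HB. exists (/ (K * (B + 1) + 1)). set (m := / (K * (B + 1) + 1)).
  assert (Hm : 0 < m) by (apply Rinv_0_lt_compat; nra).
  assert (Hm1 : m * (K * (B + 1) + 1) = 1) by (unfold m; field; nra).
  assert (0 <= m * (K * (B + 1))) by (apply Rmult_le_pos; nra).
  assert (0 <= K * m * (1 - m)) by (apply Rmult_le_pos; [apply Rmult_le_pos|]; lra).
  split; [exact Hm|nra].
Qed.

Theorem lemma3p11 :
  forall (n : nat) (A : R), 0 < A ->
  exists f f1 f2 : R -> R,
    C2_I11 f f1 f2 /\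
    (forall x, -1 <= x <= 0 -> f x <= 0) /\
    (forall x, 0 <= x <= 1 -> 0 <= f x) /\
    forall c : nat -> R,
      (forall x, -1 <= x <= 0 -> poly_eval n c x <= 0) ->
      (forall x, 0 <= x <= 1 -> 0 <= poly_eval n c x) ->
      poly_eval n c 0 = f 0 ->
      derivable_pt_lim (poly_eval n c) 0 (f1 0) ->
      Rbar_lt (Rbar_mult (Finite A) (omega4 f2 1))
              (supnorm (fun x => f x - poly_eval n c x)).
Proof.
  intros n A HA.
  destruct (poly_coef_bound (5 + n)) as [K [HK Hcoef]].
  destruct (small_scale_exists K (48 * A) HK ltac:(lra)) as [m [Hm HKm]].
  exists (rat7 m), (rat7_d1 m), (rat7_d2 m).
  split; [now apply rat7_C2|].
  split; [intros x Hx; apply rat7_le0; lra|].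
  split; [intros x Hx; apply rat7_ge0; lra|].
  intros c Hneg Hpos _ Hd. apply Rbar_not_le_lt. intros Hle.
  assert (Hclose : forall x, -1 <= x <= 1 ->
            Rabs (rat7 m x - poly_eval n c x) <= A * (48 * m ^ 3)).
  { intros x Hx.
    apply (Rabs_le_of_supnorm_le_mult (fun x => rat7 m x - poly_eval n c x)
             (omega4 (rat7_d2 m) 1));
      [exact HA|apply omega4_ge0; lra|apply omega4_rat7_d2_le; exact Hm|exact Hle|exact Hx]. }
  assert (Hc3 : 0 <= poly_trunc n c 3).
  { apply poly_trunc_coef3_ge0; [exact Hneg|exact Hpos|].
    rewrite (rat7_d1_0 m Hm) in Hd. exact Hd. }
  assert (Hr3 := Hcoef _ _ (fun x Hx => Rabs_poly_sub_quintic_le m n c _ x Hm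
                              ltac:(lra) (Hclose x ltac:(lra))) 3%nat ltac:(lia)).
  cbv beta in Hr3. unfold quintic_coef in Hr3.
  assert (Hm2 : 0 < m ^ 2) by (apply pow_lt; lra).
  assert (Hsmall : m ^ 2 <= K * (A * (48 * m ^ 3) + m ^ 4))
    by (eapply Rle_trans; [|exact Hr3]; rewrite Rabs_right; lra).
  replace (K * (A * (48 * m ^ 3) + m ^ 4)) with (m ^ 2 * (K * (48 * A + m) * m))
    in Hsmall by ring.
  nra.
Qed.
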